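(* A set $S\subseteq\mathbb{N}^{\mathbb{N}}$ is guessable if and only if it is defined by some sentence $\forall x\,\exists y\,\phi$ of $\mathscr{L}_{\max}$ and also by some sentence $\exists x\,\forall y\,\psi$ of $\mathscr{L}_{\max}$, where $\phi$ and $\psi$ are quantifier-free.
   Context: A function $G:\mathbb{N}^{<\mathbb{N}}\to\{0,1\}$ ($\mathbb{N}^{<\mathbb{N}}$ = finite sequences of naturals) is a guesser for $S\subseteq\mathbb{N}^{\mathbb{N}}$ if for every $f:\mathbb{N}\to\mathbb{N}$ there is $m>0$ such that for all $n>m$, $G(f(0),\ldots,f(n))$ equals $1$ if $f\in S$ and $0$ if $f\notin S$; $S$ is guessable if it has a guesser. The language $\mathscr{L}_{\max}$ is a first-order language extended with ellipses: constant symbols $\mathbf{n}$ (also $\bar n$) for each $n\in\mathbb{N}$; an $n$-ary function symbol $\tilde w$ for each $w:\mathbb{N}^n\to\mathbb{N}$ ($n>0$); an $n$-ary predicate symbol $\tilde p$ for each $p\subseteq\mathbb{N}^n$ ($n>0$); an $\mathbb{N}^{<\mathbb{N}}$-ary function symbol $\tilde G$ for each $G:\mathbb{N}^{<\mathbb{N}}\to\mathbb{N}$ (applicable to any finite number of arguments); a unary function symbol $\mathbf{f}$; and a symbol $\cdots_x$ for each variable $x$. Besides the usual terms, for $\mathbb{N}^{<\mathbb{N}}$-ary $G$, terms $u,v$ and variable $x$, $G(u(\mathbf{0}),\cdots_x,u(v))$ is a term with free variables $(FV(u)\setminus\{x\})\cup FV(v)$. Formulas are built as usual. For $f:\mathbb{N}\to\mathbb{N}$,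 $\mathscr{M}_f$ is the structure on $\mathbb{N}$ interpreting every symbol as the object it names and $\mathbf{f}$ as $f$; terms are evaluated as usual, plus $G(u(\mathbf{0}),\cdots_x,u(v))^{s}=G\big(u(x|\mathbf{0})^{s},\ldots,u(x|\overline{v^{s}})^{s}\big)$ under an assignment $s$, where $u(x|c)$ is substitution of the constant $c$ for $x$ in $u$. A sentence $\phi$ defines $S\subseteq\mathbb{N}^{\mathbb{N}}$ if for every $f:\mathbb{N}\to\mathbb{N}$, $\mathscr{M}_f\models\phi$ iff $f\in S$. *)

From mathcomp Require Import all_boot.
Set Implicit Arguments.
Unset Strict Implicit.
Unset Printing Implicit Defensive.

Definition var := nat.

(* Terms of L_max.  Symbols are identified with the objects they name. *)
Inductive term : Type :=
| tvar   (x : var)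
| tconst (n : nat)
| tfun   (n : nat) (w : ('I_n.+1 -> nat) -> nat)
         (args : 'I_n.+1 -> term)
| tG     (G : seq nat -> nat) (k : nat) (args : 'I_k -> term)
| tf     (t : term)
| tell   (G : seq nat -> nat) (x : var) (u v : term).

Inductive formula : Type :=
| feq   (t1 t2 : term)
| fpred (n : nat) (p : ('I_n.+1 -> nat) -> Prop) (args : 'I_n.+1 -> term)
| fnot  (a : formula)
| fand  (a b : formula)
| for_  (a b : formula)
| fimp  (a b : formula)
| fall  (x : var) (a : formula)
| fex   (x : var) (a : formula).

Fixpoint tfree (z : var) (t : term) : Prop :=
  match t with
  | tvar x => z = x
  | tconst _ => False
  | tfun n _ args => exists i, tfree z (args i)
  | tG _ k args => exists i, tfree z (args i)
  | tf t => tfree z t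
  | tell _ x u v => (tfree z u /\ z <> x) \/ tfree z v
  end.

Fixpoint ffree (z : var) (a : formula) : Prop :=
  match a with
  | feq t1 t2 => tfree z t1 \/ tfree z t2
  | fpred n _ args => exists i, tfree z (args i)
  | fnot a => ffree z a
  | fand a b | for_ a b | fimp a b => ffree z a \/ ffree z b
  | fall x a | fex x a => ffree z a /\ z <> x
  end.

Definition sentence (a : formula) : Prop := forall z, ~ ffree z a.

Fixpoint qfree (a : formula) : Prop :=
  match a with
  | feq _ _ | fpred _ _ _ => True
  | fnot a => qfree a
  | fand a b | for_ a b | fimp a b => qfree a /\ qfree b
  | fall _ _ | fex _ _ => False
  end.

Definition upd (s : var -> nat) (x : var) (k : nat) : var -> nat :=
  fun z => if z == x then k else s z.

(* Evaluation of terms in M_f under the assignment s.  The ellipsis term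
   G(u(0),..._x,u(v)) evaluates to G(u^{s[x:=0]}, ..., u^{s[x:=v^s]}),
   i.e. to G(u(x|0)^s, ..., u(x|v^s)^s). *)
Fixpoint teval (f : nat -> nat) (s : var -> nat) (t : term) : nat :=
  match t with
  | tvar x => s x
  | tconst n => n
  | tfun n w args => w (fun i => teval f s (args i))
  | tG G k args => G [seq teval f s (args i) | i <- enum 'I_k]
  | tf t => f (teval f s t)
  | tell G x u v =>
      G [seq teval f (upd s x k) u | k <- iota 0 (teval f s v).+1]
  end.

Fixpoint sat (f : nat -> nat) (s : var -> nat) (a : formula) : Prop :=
  match a with
  | feq t1 t2 => teval f s t1 = teval f s t2
  | fpred n p args => p (fun i => teval f s (args i))
  | fnot a => ~ sat f s a
  | fand a b => sat f s a /\ sat f s b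
  | for_ a b => sat f s a \/ sat f s b
  | fimp a b => sat f s a -> sat f s b
  | fall x a => forall k, sat f (upd s x k) a
  | fex x a => exists k, sat f (upd s x k) a
  end.

(* M_f |= phi for a sentence phi (truth is independent of the assignment). *)
Definition models (f : nat -> nat) (a : formula) : Prop :=
  forall s : var -> nat, sat f s a.

Definition defines (a : formula) (S : (nat -> nat) -> Prop) : Prop :=
  sentence a /\ forall f : nat -> nat, models f a <-> S f.

(* Guessers and guessability; G takes values in {0,1} = bool. *)
Definition guesser (G : seq nat -> bool) (S : (nat -> nat) -> Prop) : Prop :=
  forall f : nat -> nat, exists m : nat, 0 < m /\
    forall n : nat, m < n ->
      (S f -> G (mkseq f n.+1) = true) /\ (~ S f -> G (mkseq f n.+1) = false).

Definition guessable (S : (nat -> nat) -> Prop) : Prop :=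
  exists G : seq nat -> bool, guesser G S.

From mathcomp Require Import all_boot zify.
From Stdlib Require Import Classical ClassicalEpsilon FunctionalExtensionality.

Set Implicit Arguments.
Unset Strict Implicit.
Unset Printing Implicit Defensive.

(* A quantifier-free formula, at a fixed assignment, only inspects finitely
   many values of [f]: the ellipsis term reads [f] below a bound which is itself
   computed from a finite part of [f].  A [forall x, exists y] and an
   [exists x, forall y] definition thus present [S] both as a Pi2 and as a
   Sigma2 condition on prefix-determined predicates, and the guess "for some
   [k], the first [k + 1] Pi2 instances are already witnessed by the prefix and
   no refutation of the [k]-th Sigma2 instance is visible yet" stabilises on the
   right answer.  Conversely, the ellipsis term [G(f(0), ..., f(y))] expresses
   "the guesser [G] answers 1 at infinitely many [y]" as a [forall exists]
   sentence and "[G] answers 1 at all large [y]" as an [exists forall] one. *)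

Definition agree (n : nat) (f g : nat -> nat) := forall i, i < n -> f i = g i.

Definition eventually (P : nat -> Prop) := exists N, forall n, N <= n -> P n.

Lemma eventually_mono (P Q : nat -> Prop) :
  (forall n, P n -> Q n) -> eventually P -> eventually Q.
Proof. by move=> PQ [N hN]; exists N => n /hN /PQ. Qed.

Lemma eventually_and (P Q : nat -> Prop) :
  eventually P -> eventually Q -> eventually (fun n => P n /\ Q n).
Proof.
move=> [M hM] [N hN]; exists (maxn M N) => n; rewrite geq_max => /andP[hm hn].
by split; [apply: hM | apply: hN].
Qed.

Lemma eventually_ge m : eventually (fun n => m <= n).
Proof. by exists m. Qed.

Lemma eventually_forall_leq k (P : nat -> nat -> Prop) :
  (forall j, j <= k -> eventually (P j)) ->
  eventually (fun n => forall j, j <= k -> P j n).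
Proof.
elim: k => [|k IH] hP.
  by move: (hP 0 (leqnn 0)); apply: eventually_mono => n h0 j; rewrite leqn0 => /eqP ->.
move: (eventually_and (IH (fun j hj => hP j (leqW hj))) (hP k.+1 (leqnn _))).
apply: eventually_mono => n [hle hk] j.
by rewrite leq_eqVlt ltnS => /orP[/eqP -> | /hle].
Qed.

(* Continuity for the product topology on [nat -> nat] and the discrete one on [T]. *)
Definition determined {T} (F : (nat -> nat) -> T) :=
  forall f, eventually (fun n => forall g, agree n f g -> F g = F f).

Lemma determined_const T (c : T) : determined (fun _ => c).
Proof. by move=> f; exists 0. Qed.

Lemma determined_map T U (h : T -> U) (F : (nat -> nat) -> T) :
  determined F -> determined (fun g => h (F g)).
Proof. by move=> dF f; apply: eventually_mono (dF f) => n hF g /hF ->. Qed.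

Lemma determined_map2 T U V (h : T -> U -> V) F1 F2 :
  determined F1 -> determined F2 -> determined (fun g => h (F1 g) (F2 g)).
Proof.
move=> d1 d2 f; apply: eventually_mono (eventually_and (d1 f) (d2 f)).
by move=> n [h1 h2] g hg; rewrite h1 // h2.
Qed.

Lemma determined_map_seq I T (F : I -> (nat -> nat) -> T) (s : seq I) :
  (forall i, determined (F i)) -> determined (fun g => [seq F i g | i <- s]).
Proof.
move=> dF; elim: s => [|i s IH] /=; first exact: determined_const.
exact: determined_map2 (dF i) IH.
Qed.

Lemma determined_map_seq_dep I T (F : I -> (nat -> nat) -> T) V :
  (forall i, determined (F i)) -> determined V ->
  determined (fun g => [seq F i g | i <- V g]).
Proof.
move=> dF dV f; have dFs := determined_map_seq (V f) dF.
apply: eventually_mono (eventually_and (dV f) (dFs f)).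
by move=> n [hV hFs] g hg; rewrite hV // hFs.
Qed.

Lemma determined_fun_ord K T (F : 'I_K -> (nat -> nat) -> T) :
  (forall i, determined (F i)) -> determined (fun g i => F i g).
Proof.
move=> /(determined_map_seq (enum 'I_K)) dF f.
apply: eventually_mono (dF f) => n hF g /hF /eq_in_map hg.
by apply: functional_extensionality => i; apply: hg; rewrite mem_enum.
Qed.

Lemma determined_apply V : determined V -> determined (fun g => g (V g)).
Proof.
move=> dV f; apply: eventually_mono (eventually_and (dV f) (eventually_ge (V f).+1)).
by move=> n [hV hn] g hg; rewrite hV // -hg.
Qed.

Lemma determined_teval s t : determined (fun g => teval g s t).
Proof.
elim: t s => [x|c|n w args IH|G k args IH|t IH|G x u IHu v IHv] s /=.
- exact: determined_const.
- exact: determined_const.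
- exact: determined_map (determined_fun_ord (fun i => IH i s)).
- exact: determined_map (determined_map_seq _ (fun i => IH i s)).
- exact: determined_apply.
- apply: determined_map.
  apply: (determined_map_seq_dep (fun k => IHu (upd s x k))
           (V := fun g => iota 0 (teval g s v).+1)).
  exact: (determined_map (fun m => iota 0 m.+1) (IHv s)).
Qed.

Lemma determined_sat s a : qfree a -> determined (fun g => sat g s a).
Proof.
elim: a => [t1 t2|n p args|a IH|a IHa b IHb|a IHa b IHb|a IHa b IHb|//|//] /=.
- by move=> _; apply: determined_map2; apply: determined_teval.
- move=> _; apply: (determined_map p).
  exact: determined_fun_ord (fun i => determined_teval s (args i)).
- by move=> /IH /(determined_map not).
- by move=> [/IHa da /IHb db]; apply: (determined_map2 and da db).
- by move=> [/IHa da /IHb db]; apply: (determined_map2 or da db).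
- by move=> [/IHa da /IHb db]; apply: (determined_map2 (fun A B => A -> B) da db).
Qed.

Lemma upd_eq_on (s s' : var -> nat) x k z :
  (z <> x -> s z = s' z) -> upd s x k z = upd s' x k z.
Proof. by move=> hs; rewrite /upd; case: eqP => // /hs. Qed.

Lemma teval_eq_on_free f s s' t :
  (forall z, tfree z t -> s z = s' z) -> teval f s t = teval f s' t.
Proof.
elim: t s s' => [x|c|n w args IH|G k args IH|t IH|G x u IHu v IHv] s s' hs;
  cbn [teval tfree] in hs |- *.
- exact: hs.
- by [].
- congr (w _); apply: functional_extensionality => i.
  by apply: IH => z hz; apply: hs; exists i.
- congr (G _); apply: eq_map => i; apply: IH => z hz; apply: hs; by exists i.
- by rewrite (IH s s').
- rewrite (IHv s s'); last by move=> z hz; apply: hs; right.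
  congr (G _); apply: eq_map => k; apply: IHu => z hz.
  by apply: upd_eq_on => hzx; apply: hs; left.
Qed.

Lemma sat_iff_on_free f s s' a :
  (forall z, ffree z a -> s z = s' z) -> (sat f s a <-> sat f s' a).
Proof.
elim: a s s' =>
  [t1 t2|n p args|a IH|a IHa b IHb|a IHa b IHb|a IHa b IHb|x a IH|x a IH] s s' /= hs.
- by rewrite (@teval_eq_on_free f s s' t1) ?(@teval_eq_on_free f s s' t2) // => z hz;
    apply: hs; [right | left].
- have -> // : (fun i => teval f s (args i)) = (fun i => teval f s' (args i)).
  apply: functional_extensionality => i; apply: teval_eq_on_free => z hz.
  by apply: hs; exists i.
- by rewrite (IH s s').
- by rewrite (IHa s s') ?(IHb s s') // => z hz; apply: hs; [right | left].
- by rewrite (IHa s s') ?(IHb s s') // => z hz; apply: hs; [right | left].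
- by rewrite (IHa s s') ?(IHb s s') // => z hz; apply: hs; [right | left].
- have hk k : sat f (upd s x k) a <-> sat f (upd s' x k) a.
    by apply: IH => z hz; apply: upd_eq_on => hzx; apply: hs.
  by split=> h k; apply/hk.
- have hk k : sat f (upd s x k) a <-> sat f (upd s' x k) a.
    by apply: IH => z hz; apply: upd_eq_on => hzx; apply: hs.
  by split=> -[k /hk h]; exists k.
Qed.

Lemma sentence_models f s a : sentence a -> (models f a <-> sat f s a).
Proof.
move=> closed; split=> [|h s']; first exact.
have no_free z : ffree z a -> s' z = s z by move/closed.
exact/(sat_iff_on_free f no_free).
Qed.

Definition forces (sg : seq nat) (P : (nat -> nat) -> Prop) :=
  forall g, agree (size sg) (nth 0 sg) g -> P g.

Lemma forces_mkseq f n P :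
  forces (mkseq f n) P <-> forall g, agree n f g -> P g.
Proof.
rewrite /forces size_mkseq.
have agree_nth g : agree n (nth 0 (mkseq f n)) g <-> agree n f g.
  by split=> h i hi; rewrite -h // nth_mkseq.
by split=> h g /agree_nth /h.
Qed.

Lemma forces_mkseq_holds f n P : forces (mkseq f n) P -> P f.
Proof. by move/forces_mkseq; apply. Qed.

Lemma eventually_forces f P :
  determined P -> P f -> eventually (fun n => forces (mkseq f n) P).
Proof.
by move=> dP Pf; apply: eventually_mono (dP f) => n hP; apply/forces_mkseq => g /hP ->.
Qed.

Definition decide (P : Prop) : bool :=
  if excluded_middle_informative P then true else false.

Lemma decideP P : decide P <-> P.
Proof. by rewrite /decide; case: excluded_middle_informative. Qed.

Lemma guesser_iff_eventually G S :
  guesser G S <-> forall f, eventually (fun n => G (mkseq f n) <-> S f).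
Proof.
split=> hG f.
- have [m [_ hm]] := hG f; exists m.+2 => n le_mn.
  have -> : n = n.-1.+1 by lia.
  have [in_S out_S] := hm n.-1 ltac:(lia).
  by split=> [Gn | /in_S -> //]; apply: NNPP => /out_S; rewrite Gn.
- have [N hN] := hG f; exists N.+1; split=> // n lt_Nn.
  have /hN [G_S S_G] : N <= n.+1 by lia.
  by split=> [/S_G // | notS]; apply/negbTE/negP => /G_S.
Qed.

Lemma guessable_of_pi2_sigma2 (S : (nat -> nat) -> Prop)
    (Phi Psi : nat -> nat -> (nat -> nat) -> Prop) :
  (forall k k', determined (Phi k k')) -> (forall k k', determined (Psi k k')) ->
  (forall f, S f <-> forall k, exists k', Phi k k' f) ->
  (forall f, S f <-> exists k, forall k', Psi k k' f) ->
  guessable S.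
Proof.
move=> dPhi dPsi defPhi defPsi.
pose guess sg := exists k,
  (forall j, j <= k -> exists k', forces sg (Phi j k')) /\
  (forall k', ~ forces sg (fun g => ~ Psi k k' g)).
exists (fun sg => decide (guess sg)); apply/guesser_iff_eventually => f.
have [Sf | notSf] := classic (S f).
- have [k Psi_k] := (defPsi f).1 Sf.
  have Phi_witnessed :
      eventually (fun n => forall j, j <= k -> exists k', forces (mkseq f n) (Phi j k')).
    apply: eventually_forall_leq => j _; have [k' Phi_jk'] := (defPhi f).1 Sf j.
    by move: (eventually_forces (dPhi j k') Phi_jk'); apply: eventually_mono; exists k'.
  apply: eventually_mono Phi_witnessed => n hn; rewrite decideP; split=> // _.
  by exists k; split=> // k' /forces_mkseq_holds; apply.
- have [k notPhi_k] : exists k, forall k', ~ Phi k k' f.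
    have /not_all_ex_not [k /not_ex_all_not] : ~ forall k, exists k', Phi k k' f.
      by rewrite -defPhi.
    by exists k.
  have notPsi j : exists k', ~ Psi j k' f.
    have notSigma : ~ exists j, forall k', Psi j k' f by rewrite -defPsi.
    exact: not_all_ex_not (not_ex_all_not _ _ notSigma j).
  have Psi_refuted : eventually (fun n => forall j, j <= k ->
      exists k', forces (mkseq f n) (fun g => ~ Psi j k' g)).
    apply: eventually_forall_leq => j _; have [k' notPsi_jk'] := notPsi j.
    move: (eventually_forces (determined_map not (dPsi j k')) notPsi_jk').
    by apply: eventually_mono; exists k'.
  apply: eventually_mono Psi_refuted => n hn; rewrite decideP.
  split=> // -[j [Phi_upto_j not_refuted]].
  have lt_jk : j < k.
    rewrite ltnNge; apply/negP => /Phi_upto_j [k'].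
    by move/forces_mkseq_holds; apply: notPhi_k.
  by have [k' /not_refuted] := hn j (ltnW lt_jk).
Qed.

Lemma guesser_pi2 (G : seq nat -> bool) (S : (nat -> nat) -> Prop) f :
  eventually (fun n => G (mkseq f n) <-> S f) ->
  (S f <-> forall k, exists k', k < k' /\ G (mkseq f k'.+1)).
Proof.
move=> [N hN]; split=> [Sf k | inf_often].
  by exists (k + N).+1; split; [lia | apply/hN; first lia].
by have [k' [lt_Nk' /hN]] := inf_often N; apply; lia.
Qed.

Lemma guesser_sigma2 (G : seq nat -> bool) (S : (nat -> nat) -> Prop) f :
  eventually (fun n => G (mkseq f n) <-> S f) ->
  (S f <-> exists k, forall k', k < k' -> G (mkseq f k'.+1)).
Proof.
move=> [N hN]; split=> [Sf | [k from_k]].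
  by exists N => k' lt_Nk'; apply/hN; first lia.
by apply/(hN (k + N).+2); [lia | apply: from_k; lia].
Qed.

Definition lt_atom (x y : var) : formula :=
  fpred (n := 1) (fun a => a ord0 < a ord_max)
    (fun i => if i == ord0 then tvar x else tvar y).

(* [G(f(0), ..., f(y))] = 1, with [y] the variable [1]. *)
Definition guess_atom (G : seq nat -> bool) : formula :=
  feq (tell (fun l => nat_of_bool (G l)) 0 (tf (tvar 0)) (tvar 1)) (tconst 1).

Lemma sat_guess_atom f s G : sat f s (guess_atom G) <-> G (mkseq f (s 1).+1).
Proof. by rewrite /=; case: (G _). Qed.

Lemma ffree_lt_atom z x y : ffree z (lt_atom x y) -> z = x \/ z = y.
Proof. by case=> i; case: (i == ord0); [left | right]. Qed.

Lemma ffree_guess_atom z G : ffree z (guess_atom G) -> z = 1.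
Proof. by case=> [[[-> //] | //] | //]. Qed.

Lemma defines_guess_pi2 G S :
  guesser G S -> defines (fall 0 (fex 1 (fand (lt_atom 0 1) (guess_atom G)))) S.
Proof.
move=> /guesser_iff_eventually hG.
have closed : sentence (fall 0 (fex 1 (fand (lt_atom 0 1) (guess_atom G)))).
  by move=> z [[[/ffree_lt_atom | /ffree_guess_atom] ? ?]]; lia.
split=> // f; rewrite (sentence_models f (fun=> 0) closed) (guesser_pi2 (hG f)).
split=> h k; have [k' [lt_kk' hk']] := h k; exists k'; split=> //.
- by move/sat_guess_atom: hk'.
- exact/sat_guess_atom.
Qed.

Lemma defines_guess_sigma2 G S :
  guesser G S -> defines (fex 0 (fall 1 (fimp (lt_atom 0 1) (guess_atom G)))) S.
Proof.
move=> /guesser_iff_eventually hG.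
have closed : sentence (fex 0 (fall 1 (fimp (lt_atom 0 1) (guess_atom G)))).
  by move=> z [[[/ffree_lt_atom | /ffree_guess_atom] ? ?]]; lia.
split=> // f; rewrite (sentence_models f (fun=> 0) closed) (guesser_sigma2 (hG f)).
split=> -[k h]; exists k => k' lt_kk'.
- by move/sat_guess_atom: (h k' lt_kk').
- exact/sat_guess_atom/h.
Qed.

Theorem theorem4p7 (S : (nat -> nat) -> Prop) :
  guessable S <->
  (exists (x y : var) (phi : formula), qfree phi /\ defines (fall x (fex y phi)) S) /\
  (exists (x y : var) (psi : formula), qfree psi /\ defines (fex x (fall y psi)) S).
Proof.
split=> [[G hG] | ].
  split.
  - exists 0, 1, (fand (lt_atom 0 1) (guess_atom G)).
    by split; last exact: defines_guess_pi2.
  - exists 0, 1, (fimp (lt_atom 0 1) (guess_atom G)).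
    by split; last exact: defines_guess_sigma2.
move=> [[x [y [phi [qf_phi [closed_phi def_phi]]]]]
         [x' [y' [psi [qf_psi [closed_psi def_psi]]]]]].
pose s0 : var -> nat := fun=> 0.
apply: (@guessable_of_pi2_sigma2 S
          (fun k k' g => sat g (upd (upd s0 x k) y k') phi)
          (fun k k' g => sat g (upd (upd s0 x' k) y' k') psi)).
- by move=> k k'; apply: determined_sat.
- by move=> k k'; apply: determined_sat.
- by move=> f; rewrite -def_phi (sentence_models f s0 closed_phi).
- by move=> f; rewrite -def_psi (sentence_models f s0 closed_psi).
Qed.
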